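(* Let $k$ be a positive integer, let $n_1,\ldots,n_k,d_1,\ldots,d_k$ be positive integers, and let $r_1,\ldots,r_k$ be integers with $0\le r_i\le d_i$ for all $i$ and $0<\sum_i r_i<\sum_i d_i$. Suppose one of the following holds: (1) $k=1$, $n_1,d_1\ge 2$, and $(n_1,d_1)\neq(2,2)$; (2) $k=2$, and if $n_1=n_2=1$ then $d_1,d_2\ge 2$; (3) $k\ge 3$. Then $$\prod_{i=1}^k\binom{n_i+r_i}{n_i}+\prod_{i=1}^k\binom{n_i+d_i-r_i}{n_i}<\prod_{i=1}^k\binom{n_i+d_i}{n_i}.$$ *)

From mathcomp Require Import all_boot.
Set Implicit Arguments. Unset Strict Implicit. Unset Printing Implicit Defensive.

(* Put x_i = 'C(n_i + r_i, n_i), y_i = 'C(n_i + d_i - r_i, n_i) and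
   z_i = 'C(n_i + d_i, n_i).  By Pascal's rule m |-> 'C(n + m, n) is
   superadditive up to one, so x_i + y_i <= z_i + 1, with a surplus r (d - r)
   when n >= 2.  Such near-additive triples are closed under products, and
   since (x + y - 1)(X + Y - 1) <= zZ the product gains the cross terms
   (x - 1)(Y - 1) + (y - 1)(X - 1).  Hence the strict inequality X + Y < Z for a
   sub-block of the factors propagates to the whole product, and it suffices to
   find one strict block: the single factor when k = 1, and for k >= 2 a pair
   i <> j with r_i > 0 and r_j < d_j, together with a third factor if k >= 3. *)

From mathcomp Require Import all_boot zify.
Set Implicit Arguments. Unset Strict Implicit. Unset Printing Implicit Defensive.

Lemma near_add_mul_cross x y z X Y Z A :
  0 < x -> 0 < y -> 0 < X -> 0 < Y -> x + y <= z + 1 -> X + Y + A <= Z + 1 ->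
  x * X + y * Y + ((x - 1) * (Y - 1) + (y - 1) * (X - 1) + A) <= z * Z + 1.
Proof.
move=> x_gt0 y_gt0 X_gt0 Y_gt0 le_xyz le_XYZ.
have : (x + y - 1) * (X + Y + A - 1) <= z * Z by apply: leq_mul; lia.
case: x x_gt0 {le_xyz} => // x _; case: y y_gt0 => // y _.
case: X X_gt0 {le_XYZ} => // X _; case: Y Y_gt0 => // Y _.
rewrite !subn1 /= => ?; nia.
Qed.

Lemma near_add_mul x y z X Y Z A :
  0 < x -> 0 < y -> 0 < X -> 0 < Y -> x + y <= z + 1 -> X + Y + A <= Z + 1 ->
  x * X + y * Y + A <= z * Z + 1.
Proof.
move=> x_gt0 y_gt0 X_gt0 Y_gt0 le_xyz.
move/(near_add_mul_cross x_gt0 y_gt0 X_gt0 Y_gt0 le_xyz).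
by apply: leq_trans; rewrite leq_add2l leq_addl.
Qed.

Section NearAdditiveProducts.
Variables (I : finType) (x y z : I -> nat).
Hypotheses (x_gt0 : forall i, 0 < x i) (y_gt0 : forall i, 0 < y i).
Hypothesis near_add : forall i, x i + y i <= z i + 1.

Lemma prod_near_add (P : pred I) :
  \prod_(i | P i) x i + \prod_(i | P i) y i <= \prod_(i | P i) z i + 1.
Proof.
pose Q X Y Z := [/\ 0 < X, 0 < Y & X + Y <= Z + 1].
suff [] : Q (\prod_(i | P i) x i) (\prod_(i | P i) y i) (\prod_(i | P i) z i) by [].
apply: (big_rec3 Q) => // i X Y Z _ [X_gt0 Y_gt0 le_XYZ].
rewrite -[X + Y]addn0 in le_XYZ.
have := near_add_mul (x_gt0 i) (y_gt0 i) X_gt0 Y_gt0 (near_add i) le_XYZ.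
by rewrite addn0; split; rewrite // muln_gt0 ?x_gt0 ?y_gt0.
Qed.

Lemma prod_lt_sub (A : {set I}) :
  \prod_(i in A) x i + \prod_(i in A) y i < \prod_(i in A) z i ->
  \prod_i x i + \prod_i y i < \prod_i z i.
Proof.
have splitA F : \prod_i F i = \prod_(i | i \notin A) F i * \prod_(i in A) F i.
  by rewrite (bigID (mem A)) mulnC.
move=> lt_A; rewrite !splitA.
have le_A : \prod_(i in A) x i + \prod_(i in A) y i + 2 <= \prod_(i in A) z i + 1 by lia.
have := near_add_mul (prodn_gt0 x_gt0) (prodn_gt0 y_gt0) (prodn_gt0 x_gt0) (prodn_gt0 y_gt0)
  (prod_near_add (fun i => i \notin A)) le_A.
by lia.
Qed.

Lemma prod_lt_pair i j : i != j ->
  2 <= (x i - 1) * (y j - 1) + (y i - 1) * (x j - 1) ->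
  \prod_i x i + \prod_i y i < \prod_i z i.
Proof.
move=> ij cross_ge2; apply: (@prod_lt_sub [set i; j]).
rewrite !big_setU1 ?inE //= !big_set1.
have near_add_j : x j + y j + 0 <= z j + 1 by rewrite addn0.
have := near_add_mul_cross (x_gt0 i) (y_gt0 i) (x_gt0 j) (y_gt0 j) (near_add i) near_add_j.
by move: cross_ge2; set c := (x i - 1) * _ + _; lia.
Qed.

Lemma prod_lt_triple i j l : i != j -> l \notin [set i; j] ->
  1 < x i -> 1 < y j -> 2 < x l + y l ->
  \prod_i x i + \prod_i y i < \prod_i z i.
Proof.
move=> ij l_ij xi_gt1 yj_gt1 xyl_gt2; apply: (@prod_lt_sub (l |: [set i; j])).
have i_j : i \notin [set j] by rewrite inE.
rewrite !big_setU1 //= !big_set1.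
have near_add_j : x j + y j + 0 <= z j + 1 by rewrite addn0.
have := near_add_mul_cross (x_gt0 i) (y_gt0 i) (x_gt0 j) (y_gt0 j) (near_add i) near_add_j.
have : 0 < (x i - 1) * (y j - 1) by rewrite muln_gt0 !subn_gt0 xi_gt1 yj_gt1.
move: (_ * (y j - 1)) => c c_gt0; rewrite addn0 => le_ij.
have {}le_ij : x i * x j + y i * y j + 1 <= z i * z j + 1 by lia.
have Xij_gt1 : 1 < x i * x j by rewrite (leq_trans xi_gt1) // leq_pmulr.
have Yij_gt1 : 1 < y i * y j by rewrite (leq_trans yj_gt1) // leq_pmull.
have := near_add_mul_cross (x_gt0 l) (y_gt0 l) (ltnW Xij_gt1) (ltnW Yij_gt1) (near_add l) le_ij.
have : 0 < (x l - 1) * (y i * y j - 1) + (y l - 1) * (x i * x j - 1).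
  by rewrite addn_gt0 !muln_gt0 !subn_gt0 Xij_gt1 Yij_gt1 !andbT; lia.
by move: ((x l - 1) * _ + _) => c' c'_gt0; lia.
Qed.
End NearAdditiveProducts.

(* The number of monomials of degree at most [m] in [n] variables. *)
Definition nmon n m := 'C(n + m, n).

Lemma nmon0 n : nmon n 0 = 1.
Proof. by rewrite /nmon addn0 binn. Qed.

Lemma nmon0n m : nmon 0 m = 1.
Proof. exact: bin0. Qed.

Lemma nmonC n m : nmon n m = nmon m n.
Proof. by rewrite /nmon -bin_sub ?leq_addr // addKn addnC. Qed.

Lemma nmonSS n m : nmon n.+1 m.+1 = nmon n.+1 m + nmon n m.+1.
Proof. by rewrite /nmon addnS binS addSnnS. Qed.

Lemma nmon1n m : nmon 1 m = m.+1.
Proof. by rewrite /nmon add1n bin1. Qed.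

Lemma mul_lt_nmon n m : n * m < nmon n m.
Proof.
elim: n m => [|n IHn] m; first by rewrite nmon0n.
elim: m => [|m IHm]; first by rewrite nmon0 muln0.
rewrite nmonSS; have := IHn m.+1; nia.
Qed.

Lemma nmon_gt0 n m : 0 < nmon n m.
Proof. exact: leq_ltn_trans (mul_lt_nmon n m). Qed.

Lemma leq_nmon_add n m t : 0 < n -> nmon n m + t <= nmon n (m + t).
Proof.
case: n => // n _; elim: t => [|t IHt]; first by rewrite !addn0.
by rewrite [m + _]addnS nmonSS; have := nmon_gt0 n (m + t).+1; lia.
Qed.

Lemma nmon_superadd n r s : 1 < n ->
  nmon n r + nmon n s + r * s <= nmon n (r + s) + 1.
Proof.
case: n => [|n] // n_gt0; elim: s => [|s IHs]; first by rewrite nmon0 muln0 !addn0.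
have := leq_nmon_add s.+1 r n_gt0; rewrite addSn [s + r]addnC => le_sr.
rewrite [r + _]addnS !nmonSS mulnS; lia.
Qed.

Lemma nmon_near_add n r s : nmon n r + nmon n s <= nmon n (r + s) + 1.
Proof.
case: n => [|[|n]]; first by rewrite !nmon0n.
  by rewrite !nmon1n; lia.
by apply: leq_trans (nmon_superadd r s _); rewrite ?leq_addr.
Qed.

Lemma nmon_add_lt n r s : 1 < n -> 0 < r -> 0 < s -> ~ (n = 2 /\ r + s = 2) ->
  nmon n r + nmon n s < nmon n (r + s).
Proof.
move=> n_gt1 r_gt0 s_gt0 not22; have [rs_gt1|rs_le1] := ltnP 1 (r * s).
  by have := nmon_superadd r s n_gt1; lia.
have [r1 s1] : r = 1 /\ s = 1 by nia.
subst r s; have {n_gt1 not22} : 2 < n by lia.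
case: n => [|n] // n_gt1.
have nmon_n1 : nmon n.+1 1 = n.+2 by rewrite nmonC nmon1n.
rewrite (nmonSS n 1) nmon_n1; have := mul_lt_nmon n 2; lia.
Qed.

Lemma exists_notin (T : finType) (A : {set T}) : #|A| < #|T| -> exists a, a \notin A.
Proof.
move=> lt_AT; have /subsetPn[a _ aNA] : ~~ ([set: T] \subset A).
  by apply: contraTN lt_AT => /subset_leq_card; rewrite cardsT -leqNgt.
by exists a.
Qed.

Lemma exists_pos_lt_pair (I : finType) (r d : I -> nat) :
  1 < #|I| -> (forall i, 0 < d i) ->
  0 < \sum_i r i -> \sum_i r i < \sum_i d i ->
  exists i j, [/\ i != j, 0 < r i & r j < d j].
Proof.
move=> card_gt1 d_gt0 sum_r_gt0 lt_sum_rd.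
have /existsP[i ri_gt0] : [exists i, 0 < r i].
  apply: contraLR sum_r_gt0 => /existsPn r0; rewrite -leqNgt leqn0 sum_nat_eq0.
  by apply/forallP => i /=; rewrite -leqn0 leqNgt r0.
have /existsP[j rj_lt_dj] : [exists j, r j < d j].
  apply: contraLR lt_sum_rd => /existsPn d_le_r; rewrite -leqNgt.
  by apply: leq_sum => j _; rewrite leqNgt d_le_r.
have [eq_ij|ij] := eqVneq i j; last by exists i, j.
rewrite -eq_ij in rj_lt_dj.
have [l li] : exists l, l \notin [set i] by apply: exists_notin; rewrite cards1.
rewrite inE in li; have [rl_gt0|rl_lt_dl] : 0 < r l \/ r l < d l by have := d_gt0 l; lia.
- by exists l, i.
- by exists i, l; rewrite eq_sym.
Qed.

Section BinomialProducts.
Variables (I : finType) (n d r : I -> nat).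
Hypotheses (n_gt0 : forall i, 0 < n i) (d_gt0 : forall i, 0 < d i).
Hypothesis r_le_d : forall i, r i <= d i.
Hypotheses (sum_r_gt0 : 0 < \sum_i r i) (sum_r_lt_d : \sum_i r i < \sum_i d i).

Let near_add i : nmon (n i) (r i) + nmon (n i) (d i - r i) <= nmon (n i) (d i) + 1.
Proof. by have := nmon_near_add (n i) (r i) (d i - r i); rewrite subnKC. Qed.

Let x_gt0 i : 0 < nmon (n i) (r i). Proof. exact: nmon_gt0. Qed.
Let y_gt0 i : 0 < nmon (n i) (d i - r i). Proof. exact: nmon_gt0. Qed.

Lemma prod_nmon_lt_card2 : #|I| = 2 -> ((forall i, n i = 1) -> forall i, 1 < d i) ->
  \prod_i nmon (n i) (r i) + \prod_i nmon (n i) (d i - r i) < \prod_i nmon (n i) (d i).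
Proof.
move=> card2 n1_d_gt1; have card_gt1 : 1 < #|I| by rewrite card2.
have [i [j [ij ri_gt0 rj_lt_dj]]] := exists_pos_lt_pair card_gt1 d_gt0 sum_r_gt0 sum_r_lt_d.
have /eqP set_ij : [set i; j] == setT by rewrite eqEcard subsetT cardsT cards2 ij card2.
have n1_d_gt1_ij : n i = 1 -> n j = 1 -> 1 < d i /\ 1 < d j.
  move=> ni1 nj1; suff n1 a : n a = 1 by split; apply: n1_d_gt1.
  have : a \in [set i; j] by rewrite set_ij inE.
  by rewrite !inE => /orP[] /eqP->.
apply: (prod_lt_pair x_gt0 y_gt0 near_add ij).
have := mul_lt_nmon (n i) (r i); have := mul_lt_nmon (n j) (d j - r j).
have := mul_lt_nmon (n i) (d i - r i); have := mul_lt_nmon (n j) (r j).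
by have := n_gt0 i; have := n_gt0 j; have := r_le_d i; nia.
Qed.

Lemma prod_nmon_lt_card_gt2 : 2 < #|I| ->
  \prod_i nmon (n i) (r i) + \prod_i nmon (n i) (d i - r i) < \prod_i nmon (n i) (d i).
Proof.
move=> card_gt2; have card_gt1 := ltnW card_gt2.
have [i [j [ij ri_gt0 rj_lt_dj]]] := exists_pos_lt_pair card_gt1 d_gt0 sum_r_gt0 sum_r_lt_d.
have [l l_ij] : exists l, l \notin [set i; j] by apply: exists_notin; rewrite cards2 ij.
apply: (prod_lt_triple x_gt0 y_gt0 near_add ij l_ij).
- by have := mul_lt_nmon (n i) (r i); have := n_gt0 i; nia.
- by have := mul_lt_nmon (n j) (d j - r j); have := n_gt0 j; nia.
- have := mul_lt_nmon (n l) (r l); have := mul_lt_nmon (n l) (d l - r l).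
  by have := n_gt0 l; have := d_gt0 l; nia.
Qed.
End BinomialProducts.

Theorem lemma2p2 (k : nat) (n d r : 'I_k -> nat)
  (hk : 0 < k)
  (hn : forall i, 0 < n i) (hd : forall i, 0 < d i)
  (hr : forall i, r i <= d i)
  (hsum0 : 0 < \sum_(i < k) r i)
  (hsum1 : \sum_(i < k) r i < \sum_(i < k) d i)
  (hcase :
     (k = 1 /\ forall i, 2 <= n i /\ 2 <= d i /\ ~ (n i = 2 /\ d i = 2)) \/
     (k = 2 /\ ((forall i, n i = 1) -> forall i, 2 <= d i)) \/
     (3 <= k)) :
  \prod_(i < k) 'C(n i + r i, n i) + \prod_(i < k) 'C(n i + (d i - r i), n i)
    < \prod_(i < k) 'C(n i + d i, n i).
Proof.
change (\prod_(i < k) nmon (n i) (r i) + \prod_(i < k) nmon (n i) (d i - r i)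
  < \prod_(i < k) nmon (n i) (d i)).
case: hcase => [[k1 hnd]|[[k2 n1_d_gt1]|k_gt2]].
- subst k; move: hsum0 hsum1; rewrite !big_ord1 => r_gt0 r_lt_d.
  have [n_gt1 [d_gt1 not22]] := hnd ord0.
  rewrite -[X in _ < nmon _ X](subnKC (hr ord0)).
  by apply: nmon_add_lt; rewrite ?subn_gt0 ?subnKC.
- by apply: (prod_nmon_lt_card2 hn hd hr hsum0 hsum1); rewrite ?card_ord.
- by apply: (prod_nmon_lt_card_gt2 hn hd hr hsum0 hsum1); rewrite card_ord.
Qed.
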